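(* Let $n\in\mathbb{N}$, $\sigma>0$, let $f:\mathbb{R}\to\mathbb{R}$ be smooth and odd, and let $F:\mathbb{R}\times X\to Y$, $F(\lambda,u)=-\Delta(\Delta u+\lambda f(u))-\lambda\sigma u$, so that $D_{uu}F(\lambda,u)[v,w]=-\Delta(\lambda f''(u)vw)$. Then for all $\lambda\in\mathbb{R}$ and $u\in X_a$: (i) $D_{uu}F(\lambda,u)[X_a,X_a]\subset Y_a$; (ii) $D_{uu}F(\lambda,u)[X_a\oplus X_b,X_a\oplus X_b]\subset Y_a\oplus Y_b$; (iii) $D_{uu}F(\lambda,u)[X_a,X_b]\subset Y_b$; (iv) $D_{uu}F(\lambda,u)[X_c,X_c]\subset Y_a\oplus Y_b$; (v) $D_{uu}F(\lambda,u)[X_a\oplus X_b,X_c]\subset Y_c$. (By symmetry of $D_{uu}F$ the order of the arguments in (iii) and (v) is irrelevant.)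
   Context: Let $\Omega=(0,1)$, $\Delta=d^2/dx^2$. $X=\{u\in H^2(\Omega): u'(0)=u'(1)=0,\ \int_\Omega u\,dx=0\}$; $Y=H^{-2}(\Omega)$ with norm $\|\Delta^{-1}u\|_{L^2}$, where $\Delta$ maps mean-zero $L^2(\Omega)$ isometrically onto $H^{-2}(\Omega)$. Let $H^2_{per}(\mathbb{R})$, $L^2_{per}(\mathbb{R})$ be the spaces of $2$-periodic functions in $H^2_{loc}$, resp. $L^2_{loc}$, with $\int_0^2v\,dx=0$. The extension of $w\in L^2(\Omega)$ is the $2$-periodic function equal to $w(x)$ on $[0,1]$ and $w(2-x)$ on $(1,2)$. For $W=H^2_{per}$ or $L^2_{per}$ let $(T_nv)(x)=-v(x+1/n)$, $W_a=N(T_n-I)$, $W_b=N(T_n^{n-1}+\dots+T_n+I)$, $W_c=N(T_n^n+I)$. For $\tau\in\{a,b,c\}$: $X_\tau=\{u\in X:\text{extension of }u\in W_\tau\subset H^2_{per}\}$, $Y_\tau=\{y\in Y:\text{extension of }\Delta^{-1}y\in W_\tau\subset L^2_{per}\}$. *)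

From HB Require Import structures.
From mathcomp Require Import all_boot all_order all_algebra.
From mathcomp Require Import all_classical all_reals all_analysis.
Set Implicit Arguments. Unset Strict Implicit. Unset Printing Implicit Defensive.
Import Order.TTheory GRing.Theory Num.Theory.
Import numFieldNormedType.Exports.
Local Open Scope classical_set_scope.
Local Open Scope ring_scope.

Section Defs.
Variable R : realType.
Local Notation mu := (@lebesgue_measure R).

Definition smooth (f : R -> R) : Prop :=
  forall (k : nat) (x : R), derivable (iter k (@derive1 R R) f) x 1.

Definition odd_fun (f : R -> R) : Prop := forall x, f (- x) = - f x.

Definition d2 (f : R -> R) : R -> R := derive1 (derive1 f).

Definition L2on (A : set R) (g : R -> R) : Prop :=
  measurable_fun A g /\ (\int[mu]_(x in A) ((g x) ^+ 2)%:E < +oo)%E.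

(* mean-zero L^2(0,1) (values outside [0,1] are irrelevant) *)
Definition L2_0 (g : R -> R) : Prop :=
  L2on `[0, 1]%classic g /\ \int[mu]_(x in `[0, 1]%classic) g x = 0.

(* X = { u in H^2(0,1) : u'(0) = u'(1) = 0, int u = 0 }.
   In one dimension u in H^2(0,1) iff (its continuous representative) satisfies
   u(x) = u(0) + int_0^x u1,  u1(x) = u1(0) + int_0^x g  with g in L^2(0,1);
   then u1 = u' on [0,1] and u'(0) = u1 0, u'(1) = u1 1. *)
Definition Xsp (u : R -> R) : Prop :=
  exists (u1 g : R -> R),
    L2on `[0, 1]%classic g /\
    (forall x, 0 <= x <= 1 ->
        u1 x = u1 0 + \int[mu]_(t in `[0, x]%classic) g t /\
        u x = u 0 + \int[mu]_(t in `[0, x]%classic) u1 t) /\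
    u1 0 = 0 /\ u1 1 = 0 /\
    \int[mu]_(x in `[0, 1]%classic) u x = 0.

Definition mod2 (x : R) : R := x - 2 * (Num.floor (x / 2))%:~R.

Definition ext (w : R -> R) : R -> R :=
  fun x => if mod2 x <= 1 then w (mod2 x) else w (2 - mod2 x).

Definition Tn (n : nat) (v : R -> R) : R -> R := fun x => - v (x + n%:R^-1).

Inductive sym := Sa | Sb | Sc.

Definition Weq (n : nat) (tau : sym) (v : R -> R) (x : R) : Prop :=
  match tau with
  | Sa => Tn n v x = v x
  | Sb => \sum_(k < n) iter k (Tn n) v x = 0
  | Sc => iter n (Tn n) v x = - v x
  end.

Definition L2per (v : R -> R) : Prop :=
  (forall x, v (x + 2) = v x) /\ measurable_fun setT v /\
  L2on `[0, 2]%classic v /\ \int[mu]_(x in `[0, 2]%classic) v x = 0.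

Definition WL2 (n : nat) (tau : sym) (v : R -> R) : Prop :=
  L2per v /\ {ae mu, forall x, Weq n tau v x}.

(* X_tau = { u in X : extension of u in W_tau subset H^2_per }.  For u in X
   the extension is automatically a (continuous) element of H^2_per, so the
   membership reduces to the defining equation, holding pointwise for the
   continuous representative. *)
Definition Xtau (n : nat) (tau : sym) (u : R -> R) : Prop :=
  Xsp u /\ forall x, Weq n tau (ext u) x.

(* direct sum of subspaces of X (elements of X are determined by [0,1]) *)
Definition Xsum (A B : (R -> R) -> Prop) (v : R -> R) : Prop :=
  exists v1 v2, A v1 /\ B v2 /\ forall x, 0 <= x <= 1 -> v x = v1 x + v2 x.

(* Test functions for H^{-2}: C^2 functions with phi'(0) = phi'(1) = 0
   (dense in the Neumann H^2 space). *)
Definition test_fn (phi : R -> R) : Prop :=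
  (forall x, derivable phi x 1) /\ (forall x, derivable (derive1 phi) x 1) /\
  continuous (d2 phi) /\ derive1 phi 0 = 0 /\ derive1 phi 1 = 0.

(* elements of Y = H^{-2}(0,1) are functionals on test functions *)
Definition distr := (R -> R) -> R.

Definition Yeq (y z : distr) : Prop := forall phi, test_fn phi -> y phi = z phi.

(* distributional (Neumann) Laplacian of h in L^2(0,1): phi |-> int h phi'' *)
Definition Lap (h : R -> R) : distr :=
  fun phi => \int[mu]_(x in `[0, 1]%classic) (h x * d2 phi x).

Definition Ysp (y : distr) : Prop := exists g, L2_0 g /\ Yeq y (Lap g).

(* Y_tau = { y in Y : extension of Delta^{-1} y in W_tau subset L^2_per };
   Delta^{-1} y is the (a.e. unique) mean-zero g with Delta g = y. *)
Definition Ytau (n : nat) (tau : sym) (y : distr) : Prop :=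
  exists g, L2_0 g /\ Yeq y (Lap g) /\ WL2 n tau (ext g).

Definition Ysum (A B : distr -> Prop) (y : distr) : Prop :=
  exists y1 y2, A y1 /\ B y2 /\ Yeq y (fun phi => y1 phi + y2 phi).

Definition DuuF (f : R -> R) (lam : R) (u v w : R -> R) : distr :=
  fun phi => - Lap (fun x => lam * d2 f (u x) * v x * w x) phi.

End Defs.

From HB Require Import structures.
From mathcomp Require Import all_boot all_order all_algebra.
From mathcomp Require Import all_classical all_reals all_analysis.
From mathcomp Require Import lra zify ring measurable_realfun.
Import Order.TTheory GRing.Theory Num.Theory.
Import numFieldNormedType.Exports.

Set Implicit Arguments.
Unset Strict Implicit.
Unset Printing Implicit Defensive.

Local Open Scope classical_set_scope.
Local Open Scope ring_scope.

(* Write [U], [V], [W] for the even 2-periodic extensions of [u], [v], [w]; the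
   density of [D_uu F(lam, u)[v, w]] extends to [H = lam f''(U) V W], again
   continuous, even and 2-periodic.  Each [X_tau] is a quasi-periodicity
   [G (x + e) = a G x]: [e = 1/n, a = -1] for [X_a], and [e = 1] with
   [a = (-1)^n] on [X_a + X_b] and [a = -(-1)^n] on [X_c].  As [f''] is odd,
   multipliers multiply, so [H] is quasi-periodic too, and invariance of the
   integral over a period gives [(1 - a) mean(H) = 0]; hence [mean(H) - H],
   whose Laplacian is [-Delta H], inherits the relation, proving (i) and (v).
   In (iii) the alternating sum defining [W_b] factors through that of [W].
   In (ii) and (iv), [H] splits as the average of the [T_n^k H], which lies in
   [W_a], plus a remainder in [W_b]. *)

Section TriangleWave.
Variable R : realType.
Implicit Types (x y : R) (k : int) (g G : R -> R).

(* The distance from [x] to [2Z]. *)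
Definition tri_wave x : R := if mod2 x <= 1 then mod2 x else 2 - mod2 x.

Lemma ext_tri_wave g x : ext g x = g (tri_wave x).
Proof. by rewrite /ext /tri_wave; case: ifP. Qed.

Lemma mod2P x : exists k, mod2 x = x - 2 * k%:~R /\ 0 <= mod2 x < 2.
Proof.
exists (Num.floor (x / 2)); split => //.
have := floor_itv (x / 2); rewrite intrD /mod2.
set k := (Num.floor (x / 2))%:~R => /andP[h1 h2].
apply/andP; split; lra.
Qed.

Lemma tri_wave_itv x : 0 <= tri_wave x <= 1.
Proof.
have [k [_ /andP[h0 h2]]] := mod2P x.
by rewrite /tri_wave; case: ifP => h; apply/andP; split; lra.
Qed.

Lemma tri_wave_dist x : exists k, tri_wave x = `|x - 2 * k%:~R|.
Proof.
have [k [ek /andP[h0 h2]]] := mod2P x.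
rewrite /tri_wave; case: ifP => h; first by exists k; rewrite -ek ger0_norm.
by exists (k + 1); rewrite intrD ltr0_norm; lra.
Qed.

Lemma tri_wave_le_dist x k : tri_wave x <= `|x - 2 * k%:~R|.
Proof.
have [j [ej /andP[h0 h2]]] := mod2P x.
have -> : x - 2 * k%:~R = mod2 x - 2 * (k - j)%:~R by rewrite ej intrB; lra.
have [l] : exists l, l = k - j by exists (k - j).
move=> <-; have : (l <= -1 \/ l = 0 \/ l = 1 \/ 2 <= l)%R by lia.
rewrite /tri_wave; case=> [hl|[->|[->|hl]]].
- have hl' : l%:~R <= -1 :> R by rewrite -(ler_int R) in hl.
  by rewrite ger0_norm; [case: ifP => h|]; lra.
- by rewrite mulr0 subr0 ger0_norm //; case: ifP => h; lra.
- by rewrite mulr1 ler0_norm; [case: ifP => h|]; lra.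
- have hl' : 2 <= l%:~R :> R by rewrite -(ler_int R) in hl.
  by rewrite ler0_norm; [case: ifP => h|]; lra.
Qed.

Lemma tri_wave_lipschitz x y : `|tri_wave x - tri_wave y| <= `|x - y|.
Proof.
have key a b : tri_wave a - tri_wave b <= `|a - b|.
  have [k ek] := tri_wave_dist b.
  have := tri_wave_le_dist a k; rewrite ek.
  have := ler_normD (a - b) (b - 2 * k%:~R).
  rewrite (_ : a - b + (b - 2 * k%:~R) = a - 2 * k%:~R); lra.
rewrite ler_norml key andbT.
by have := key y x; rewrite distrC; lra.
Qed.

Lemma continuous_tri_wave : continuous tri_wave.
Proof.
move=> x; apply/cvgrPdist_lt => e e0; near=> y.
apply: le_lt_trans (tri_wave_lipschitz x y) _; near: y.
exact: cvgr_dist_lt.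
Unshelve. all: by end_near. Qed.

Lemma tri_wave_id x : 0 <= x <= 1 -> tri_wave x = x.
Proof.
move=> /andP[h0 h1]; apply/eqP; rewrite eq_le.
have := tri_wave_le_dist x 0; rewrite mulr0 subr0 ger0_norm // => ->.
have [k ->] := tri_wave_dist x.
have : (k <= -1 \/ k = 0 \/ 1 <= k)%R by lia.
case=> [hk|[->|hk]].
- have hk' : k%:~R <= -1 :> R by rewrite -(ler_int R) in hk.
  by rewrite ger0_norm; lra.
- by rewrite mulr0 subr0 ger0_norm ?lexx.
- have hk' : 1 <= k%:~R :> R by rewrite -(ler_int R) in hk.
  by rewrite ler0_norm; lra.
Qed.

(* [tri_wave x] is the least [`|x - 2 k|], so it only depends on these distances. *)
Lemma tri_wave_eq_dist x y :
  (forall k, exists l, `|y - 2 * l%:~R| = `|x - 2 * k%:~R|) ->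
  (forall k, exists l, `|x - 2 * l%:~R| = `|y - 2 * k%:~R|) ->
  tri_wave x = tri_wave y.
Proof.
move=> xy yx; apply/eqP; rewrite eq_le; apply/andP; split.
  have [k ->] := tri_wave_dist y; have [l <-] := yx k; exact: tri_wave_le_dist.
have [k ->] := tri_wave_dist x; have [l <-] := xy k; exact: tri_wave_le_dist.
Qed.

Lemma tri_waveN x : tri_wave (- x) = tri_wave x.
Proof.
by apply: tri_wave_eq_dist => k; exists (- k);
  rewrite intrN -normrN; congr `|_|; ring.
Qed.

Lemma tri_waveD2 x : tri_wave (x + 2) = tri_wave x.
Proof.
apply: tri_wave_eq_dist => k.
  by exists (k - 1); rewrite intrB; congr `|_|; ring.
by exists (k + 1); rewrite intrD; congr `|_|; ring.
Qed.

Definition even_2periodic G : Prop :=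
  (forall x, G (x + 2) = G x) /\ (forall x, G (- x) = G x).

Lemma even_2periodic_tri_wave G : even_2periodic G -> forall x, G (tri_wave x) = G x.
Proof.
move=> [G2 GN] x.
have Gz k y : G (y + 2 * k%:~R) = G y.
  have Gn (m : nat) z : G (z + 2 * m%:R) = G z.
    elim: m z => [|m ih] z; first by rewrite mulr0 addr0.
    by rewrite -[RHS]ih -[in RHS]G2 -[m.+1]addn1 natrD; congr G; ring.
  case: k => m; first exact: Gn.
  rewrite NegzE intrN -(Gn m.+1 (y + 2 * - (m.+1)%:~R)).
  by congr G; rewrite -pmulrn; ring.
have [k ->] := tri_wave_dist x.
have Gxk : G (x - 2 * k%:~R) = G x by rewrite -mulrN -intrN Gz.
by case: (lerP 0 (x - 2 * k%:~R)) => h; [rewrite ger0_norm | rewrite ltr0_norm // GN].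
Qed.

Lemma even_2periodic_comp (p : R -> R) G : even_2periodic G -> even_2periodic (p \o G).
Proof. by move=> [G2 GN]; split=> x /=; rewrite ?G2 ?GN. Qed.

Lemma even_2periodic_comp2 (op : R -> R -> R) g G :
  even_2periodic g -> even_2periodic G -> even_2periodic (fun x => op (g x) (G x)).
Proof. by move=> [g2 gN] [G2 GN]; split=> x; rewrite ?g2 ?G2 ?gN ?GN. Qed.

Lemma ext_even_2periodic G : even_2periodic G -> ext G = G.
Proof. by move=> eG; apply/funext => x; rewrite ext_tri_wave even_2periodic_tri_wave. Qed.

Lemma even_2periodic_ext g : even_2periodic (ext g).
Proof. by split=> x; rewrite !ext_tri_wave ?tri_waveD2 ?tri_waveN. Qed.

Lemma ext_id g x : 0 <= x <= 1 -> ext g x = g x.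
Proof. by move=> x01; rewrite ext_tri_wave tri_wave_id. Qed.

Lemma eq_ext g G : (forall x, 0 <= x <= 1 -> g x = G x) -> ext g =1 ext G.
Proof. by move=> eq_gG x; rewrite !ext_tri_wave eq_gG // tri_wave_itv. Qed.

Lemma continuous_ext g : {within `[0, 1], continuous g} -> continuous (ext g).
Proof.
move=> /subspace_continuousP cg x.
have -> : ext g = g \o tri_wave by apply/funext => y; rewrite ext_tri_wave.
have tri01 y : `[0, 1]%classic (tri_wave y) by rewrite /= in_itv /= tri_wave_itv.
apply: cvg_trans (cg _ (tri01 x)) => P /= gP.
have : (tri_wave @ x) (fun z => `[0, 1]%classic z -> P (g z)).
  by apply: continuous_tri_wave; exact: gP.
by rewrite /=; apply: filterS => y /= Pgy; exact/Pgy/tri01.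
Qed.

End TriangleWave.

Section Integrals.
Variable R : realType.
Local Notation mu := (@lebesgue_measure R).
Implicit Types (H : R -> R) (a b c x : R).

Lemma integrable_continuous H a b : continuous H -> mu.-integrable `[a, b] (EFin \o H).
Proof.
move=> cH; apply: continuous_compact_integrable; first exact: segment_compact.
exact: continuous_subspaceT.
Qed.

Lemma L2on_continuous H a b : continuous H -> L2on `[a, b] H.
Proof.
move=> cH; split.
  by have /integrableP[/measurable_EFinP] := integrable_continuous a b cH.
have cH2 : continuous (fun x => H x * H x).
  by move=> x; apply: continuousM; exact: cH.
have /integrableP[_] := integrable_continuous a b cH2.
apply: le_lt_trans; rewrite le_eqVlt; apply/orP; left; apply/eqP.
by apply: eq_integral => x _ /=; rewrite expr2 ger0_norm // -expr2 sqr_ge0.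
Qed.

Lemma Rintegral_itv_split H a x b : a <= x -> x <= b -> continuous H ->
  \int[mu]_(t in `[a, b]) H t =
  \int[mu]_(t in `[a, x]) H t + \int[mu]_(t in `[x, b]) H t.
Proof.
move=> ax xb cH.
have := @Rintegral_itvB R H (BLeft a) (BRight b) x (integrable_continuous a b cH).
rewrite !bnd_simp => /(_ ax xb).
rewrite Rintegral_itv_obnd_cbnd; last first.
  apply: integrableS (integrable_continuous x b cH) => //.
  by apply: subset_itv; rewrite bnd_simp.
by move=> <-; rewrite addrC subrK.
Qed.

Lemma Rintegral_itv_shift H a b c : a <= b -> continuous H ->
  \int[mu]_(t in `[a + c, b + c]) H t = \int[mu]_(t in `[a, b]) H (t + c).
Proof.
move=> ab cH.
have dshift : derive1 (fun x : R => x + c) = cst 1.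
  apply/funext => x; rewrite derive1E (_ : (fun x => x + c) = shift c) //.
  exact: (congr1 (fun F => F x) (derive_shift 1 c)).
rewrite /Rintegral (@integration_by_substitution_increasing R (fun x => x + c)) //.
- by congr fine; apply: eq_integral => x _; rewrite dshift /= mulr1.
- by move=> x y _ _; rewrite ltrD2r.
- by rewrite dshift => x _; exact: cst_continuous.
- by rewrite dshift; exact: is_cvg_cst.
- by rewrite dshift; exact: is_cvg_cst.
- split.
  + by move=> x _; apply: derivableD => //; exact: derivable_id.
  + by apply: cvg_at_right_filter; apply: cvgD => //; exact: cvg_cst.
  + by apply: cvg_at_left_filter; apply: cvgD => //; exact: cvg_cst.
- exact: continuous_subspaceT.
Qed.

Lemma Rintegral_itv_opp H a b : a <= b -> continuous H ->
  \int[mu]_(t in `[- b, - a]) H t = \int[mu]_(t in `[a, b]) H (- t).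
Proof.
move=> ab cH; rewrite /Rintegral; congr fine.
by rewrite integration_by_substitution_oppr //; exact: continuous_subspaceT.
Qed.

Lemma periodic_Rintegral02_shift H c : continuous H ->
  (forall x, H (x + 2) = H x) -> 0 <= c <= 2 ->
  \int[mu]_(t in `[0, 2]) H (t + c) = \int[mu]_(t in `[0, 2]) H t.
Proof.
move=> cH H2 /andP[c0 c2].
rewrite -Rintegral_itv_shift // add0r (@Rintegral_itv_split _ _ 2) //; last by lra.
rewrite [RHS](@Rintegral_itv_split _ _ c) // addrC; congr (_ + _).
have -> : `[2, 2 + c] = `[0 + 2, c + 2] :> interval R by rewrite add0r addrC.
rewrite Rintegral_itv_shift //.
by apply: eq_Rintegral => x _; rewrite H2.
Qed.

Lemma even_2periodic_Rintegral02 H : continuous H -> even_2periodic H ->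
  \int[mu]_(t in `[0, 2]) H t = 2 * \int[mu]_(t in `[0, 1]) H t.
Proof.
move=> cH [H2 HN].
rewrite (@Rintegral_itv_split _ _ 1) //; try lra.
suff -> : \int[mu]_(t in `[1, 2]) H t = \int[mu]_(t in `[0, 1]) H t by lra.
have := @Rintegral_itv_opp H (-2) (-1); rewrite !opprK => -> //; last by lra.
transitivity (\int[mu]_(t in `[-2, -1]) H (t + 2)).
  by apply: eq_Rintegral => x _; rewrite HN H2.
rewrite -Rintegral_itv_shift //; last by lra.
have -> : -2 + 2 = 0 :> R by lra.
by have -> : -1 + 2 = 1 :> R by lra.
Qed.

Lemma Rintegral01_cstB H c : continuous H ->
  \int[mu]_(x in `[0, 1]) (c - H x) = c - \int[mu]_(x in `[0, 1]) H x.
Proof.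
move=> cH; rewrite RintegralB //; last 2 first.
- exact/integrable_continuous/cst_continuous.
- exact: integrable_continuous.
have mu01 : mu `[0, 1] = 1%:E.
  by rewrite lebesgue_measure_itv /= lte_fin ltr01 -EFinD subr0.
by rewrite Rintegral_cst //= mu01 mulr1.
Qed.

End Integrals.

Section Quasiperiodic.
Variable R : realType.
Local Notation mu := (@lebesgue_measure R).
Implicit Types (e a b : R) (F G H : R -> R).

Definition quasiperiodic e a F : Prop := forall x, F (x + e) = a * F x.

Lemma quasiperiodicM e a b F G : quasiperiodic e a F -> quasiperiodic e b G ->
  quasiperiodic e (a * b) (fun x => F x * G x).
Proof. by move=> qF qG x; rewrite qF qG mulrACA. Qed.

Lemma quasiperiodicZ e a (k : R) F : quasiperiodic e a F ->
  quasiperiodic e a (fun x => k * F x).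
Proof. by move=> qF x; rewrite qF mulrCA. Qed.

Lemma quasiperiodic_odd_comp (p : R -> R) e a F : odd_fun p -> a ^+ 2 = 1 ->
  quasiperiodic e a F -> quasiperiodic e a (p \o F).
Proof.
move=> p_odd /eqP; rewrite sqrf_eq1 => /orP[]/eqP-> qF x /=; rewrite qF.
  by rewrite !mul1r.
by rewrite !mulN1r p_odd.
Qed.

Lemma quasiperiodic_iter e a F (k : nat) : quasiperiodic e a F ->
  quasiperiodic (k%:R * e) (a ^+ k) F.
Proof.
move=> qF; elim: k => [|k ih] x; first by rewrite mul0r addr0 expr0 mul1r.
by rewrite -[k.+1]addn1 natrD mulrDl mul1r addrA qF ih exprD expr1; ring.
Qed.

Lemma quasiperiodic_Rintegral01 H e a : continuous H -> even_2periodic H ->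
  0 <= e <= 2 -> quasiperiodic e a H ->
  (1 - a) * \int[mu]_(x in `[0, 1]) H x = 0.
Proof.
move=> cH eH e02 qH.
have := periodic_Rintegral02_shift cH eH.1 e02.
under eq_Rintegral do rewrite qH.
rewrite RintegralZl //; last exact: integrable_continuous.
rewrite even_2periodic_Rintegral02 //; set I := Rintegral _ _ _ => h.
have -> : (1 - a) * I = (2 * I - a * (2 * I)) / 2 by field.
by rewrite h subrr mul0r.
Qed.

Lemma quasiperiodic_cstB H e a : continuous H -> even_2periodic H ->
  0 <= e <= 2 -> quasiperiodic e a H ->
  quasiperiodic e a (fun x => \int[mu]_(t in `[0, 1]) H t - H x).
Proof.
move=> cH eH e02 qH x.
have := quasiperiodic_Rintegral01 cH eH e02 qH; rewrite qH.
set I := Rintegral _ _ _ => h; rewrite mulrBr; congr (_ - _).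
by apply/eqP; rewrite -subr_eq0 -{1}(mul1r I) -mulrBl h.
Qed.

End Quasiperiodic.

Section SpaceY.
Variable R : realType.
Local Notation mu := (@lebesgue_measure R).
Implicit Types (F G H : R -> R) (phi : R -> R).

Lemma continuous_d2_test_fn phi : test_fn phi -> continuous (d2 phi).
Proof. by case=> _ [_ []]. Qed.

Lemma Rintegral01_d2 phi : test_fn phi -> \int[mu]_(x in `[0, 1]) d2 phi x = 0.
Proof.
move=> [d0 [d1 [c2 [e0 e1]]]].
have cd1 : continuous (derive1 phi).
  by move=> x; apply: differentiable_continuous; apply/derivable1_diffP.
have ftc := @continuous_FTC2 R (d2 phi) (derive1 phi) 0 1 ltr01 (continuous_subspaceT c2).
have d1_cont : derivable_oo_LRcontinuous (derive1 phi) 0 1.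
  split; first by move=> x _; exact: d1.
  + exact: cvg_at_right_filter (cd1 0).
  + exact: cvg_at_left_filter (cd1 1).
rewrite /Rintegral (ftc d1_cont) //.
by rewrite e0 e1 -EFinB subrr.
Qed.

Lemma integrable_Lap H phi : continuous H -> test_fn phi ->
  mu.-integrable `[0, 1] (EFin \o (fun x => H x * d2 phi x)).
Proof.
move=> cH /continuous_d2_test_fn cphi; apply: integrable_continuous.
by move=> x; apply: continuousM; [exact: cH|exact: cphi].
Qed.

Lemma LapD F G : continuous F -> continuous G ->
  Yeq (Lap (fun x => F x + G x)) (fun phi : R -> R => Lap F phi + Lap G phi).
Proof.
move=> cF cG phi tphi; rewrite /Lap -RintegralD //; last 2 first.
- exact: integrable_Lap.
- exact: integrable_Lap.
by apply: eq_Rintegral => x _; rewrite mulrDl.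
Qed.

Lemma Lap_cstB H (c : R) : continuous H ->
  Yeq (fun phi : R -> R => - Lap H phi) (Lap (fun x => c - H x)).
Proof.
move=> cH phi tphi; rewrite /Lap.
under [RHS]eq_Rintegral do rewrite mulrBl.
rewrite RintegralB //; last 2 first.
- by apply: integrable_Lap => //; exact: cst_continuous.
- exact: integrable_Lap.
rewrite RintegralZl //; last exact: integrable_continuous (continuous_d2_test_fn tphi).
by rewrite Rintegral01_d2 // mulr0 add0r.
Qed.

Lemma Lap_ext (h : R -> R) : Lap (ext h) = Lap h.
Proof.
apply/funext => phi; apply: eq_Rintegral => x.
by rewrite inE /= in_itv /= => x01; rewrite ext_id.
Qed.

Lemma Ytau_even_2periodic n tau G (y : distr R) : continuous G -> even_2periodic G ->
  \int[mu]_(x in `[0, 1]) G x = 0 -> (forall x, Weq n tau G x) -> Yeq y (Lap G) ->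
  Ytau n tau y.
Proof.
move=> cG eG G0 WG yG; exists G; split; first by split=> //; exact: L2on_continuous.
split=> //; rewrite ext_even_2periodic //; split; last exact: aeW.
split; first exact: eG.1.
split; first exact: continuous_measurable_fun.
split; first exact: L2on_continuous.
by rewrite even_2periodic_Rintegral02 // G0 mulr0.
Qed.

Lemma Ytau_oppLap n tau H : continuous H -> even_2periodic H ->
  (forall x, Weq n tau (fun y => \int[mu]_(t in `[0, 1]) H t - H y) x) ->
  Ytau n tau (fun phi : R -> R => - Lap H phi).
Proof.
move=> cH eH WcH; apply: Ytau_even_2periodic WcH (Lap_cstB _ cH).
- by move=> x; apply: cvgB; [exact: cvg_cst|exact: cH].
- exact: (even_2periodic_comp (fun h => _ - h)).
- by rewrite Rintegral01_cstB // subrr.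
Qed.

End SpaceY.

Definition altsum (R : realType) (n : nat) (V : R -> R) (x : R) : R :=
  \sum_(k < n) (-1) ^+ k * V (x + k%:R * n%:R^-1).

Section AlternatingSums.
Variable R : realType.
Variable n : nat.
Local Notation d := (n%:R^-1 : R).
Local Notation s := ((-1) ^+ n : R).
Implicit Types (x c : R) (A V H : R -> R).

Lemma iter_Tn k V x : iter k (Tn n) V x = (-1) ^+ k * V (x + k%:R * d).
Proof.
elim: k x => [|k ih] x /=; first by rewrite expr0 mul1r mul0r addr0.
by rewrite /Tn ih exprS mulN1r mulNr -[k.+1]addn1 natrD; congr (- (_ * V _)); ring.
Qed.

Lemma Weq_aE V : (forall x, Weq n Sa V x) <-> quasiperiodic d (-1) V.
Proof.
split=> hV x; first by rewrite -(hV x) /Weq /Tn mulN1r opprK.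
by rewrite /Weq /Tn hV mulN1r opprK.
Qed.

Lemma Weq_bE V x : Weq n Sb V x <-> altsum n V x = 0.
Proof. by rewrite /Weq; under eq_bigr do rewrite iter_Tn. Qed.

Lemma sum_sign : 2 * \sum_(k < n) (-1) ^+ k = 1 - s :> R.
Proof.
elim: n => [|m ih]; first by rewrite big_ord0 expr0 mulr0 subrr.
by rewrite big_ord_recr /= mulrDr ih exprS; lra.
Qed.

Lemma altsum_cst c x : (1 - s) * c = 0 -> altsum n (fun=> c) x = 0.
Proof.
move=> sc; rewrite /altsum -mulr_suml.
by have := sum_sign; move: (\sum_(k < n) _) => S hS; nra.
Qed.

Lemma altsumB A V x :
  altsum n (fun y => A y - V y) x = altsum n A x - altsum n V x.
Proof. by rewrite /altsum -sumrB; apply: eq_bigr => k _; rewrite mulrBr. Qed.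

Lemma altsumD A V x :
  altsum n (fun y => A y + V y) x = altsum n A x + altsum n V x.
Proof. by rewrite /altsum -big_split; apply: eq_bigr => k _; rewrite mulrDr. Qed.

Lemma altsumMl A V x : quasiperiodic d 1 A ->
  altsum n (fun y => A y * V y) x = A x * altsum n V x.
Proof.
move=> qA; rewrite /altsum mulr_sumr; apply: eq_bigr => k _.
by rewrite (quasiperiodic_iter k qA) expr1n mul1r mulrCA.
Qed.

Lemma continuous_altsum H : continuous H -> continuous (altsum n H).
Proof.
move=> cH; rewrite /altsum; apply: continuous_big; first exact: add_continuous.
move=> k _ x.
apply: cvgM; first exact: cvg_cst.
apply: continuous_comp; last exact: cH.
by apply: cvgD; [exact: cvg_id|exact: cvg_cst].
Qed.

Hypothesis n_gt0 : (0 < n)%N.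

Let mul_n_d : n%:R * d = 1.
Proof. by rewrite mulfV // pnatr_eq0 -lt0n. Qed.

Lemma invn_itv : 0 <= d <= 2.
Proof.
have n_ge1 : 1 <= n%:R :> R by rewrite ler1n.
have d_gt0 : 0 < d by rewrite invr_gt0 ltr0n.
by apply/andP; split; have := mul_n_d; nra.
Qed.

Lemma Weq_cE V : (forall x, Weq n Sc V x) <-> quasiperiodic 1 (- s) V.
Proof.
split=> hV x; have := hV x; rewrite /Weq iter_Tn mul_n_d.
  by move=> h; rewrite mulNr -mulrN -h signrMK.
by move=> ->; rewrite mulNr mulrN signrMK.
Qed.

Lemma quasiperiodic_invn a V : quasiperiodic d a V -> quasiperiodic 1 (a ^+ n) V.
Proof. by move=> /(quasiperiodic_iter n); rewrite mul_n_d. Qed.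

Lemma altsum_shift V x : altsum n V (x + d) = V x - s * V (x + 1) - altsum n V x.
Proof.
pose T := \sum_(k < n.+1) (-1) ^+ k * V (x + k%:R * d).
have TE : T = altsum n V x + s * V (x + 1) by rewrite /T big_ord_recr /= mul_n_d.
have TE' : T = V x - altsum n V (x + d).
  rewrite /T big_ord_recl /= mul0r addr0 expr0 mul1r /altsum -sumrN.
  congr (_ + _); apply: eq_bigr => k _.
  rewrite /bump /= add1n exprS mulN1r mulNr -[k.+1]addn1 natrD.
  by congr (- (_ * V _)); ring.
have -> : altsum n V (x + d) = V x - T by rewrite TE'; ring.
by rewrite TE; ring.
Qed.

Lemma Weq_b_quasiperiodic V : (forall x, Weq n Sb V x) -> quasiperiodic 1 s V.
Proof.
move=> hV x; have := altsum_shift V x.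
rewrite (proj1 (Weq_bE _ _) (hV _)) (proj1 (Weq_bE _ _) (hV _)) subr0 => /eqP.
by rewrite eq_sym subr_eq0 => /eqP ->; rewrite signrMK.
Qed.

Lemma altsum_antiperiodic V x : quasiperiodic d (-1) V -> altsum n V x = n%:R * V x.
Proof.
move=> qV; rewrite /altsum (eq_bigr (fun=> V x)).
  by rewrite sumr_const card_ord mulr_natl.
by move=> k _; rewrite (quasiperiodic_iter k qV) signrMK.
Qed.

Lemma altsum_shift_quasiperiodic H x : quasiperiodic 1 s H ->
  altsum n H (x + d) = - altsum n H x.
Proof. by move=> qH; rewrite altsum_shift qH signrMK subrr sub0r. Qed.

Lemma altsumN H x : (forall y, H (- y) = H y) -> quasiperiodic 1 s H ->
  altsum n H (- x) = altsum n H x.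
Proof.
move=> HN qH; rewrite -[RHS]opprK -altsum_shift_quasiperiodic //.
rewrite /altsum (reindex_inj rev_ord_inj) -sumrN; apply: eq_bigr => k _ /=.
have Hsub1 y : H (y - 1) = s * H y by rewrite -{2}(subrK 1 y) qH signrMK.
have sgn : (-1) ^+ (n - k.+1) * s = - (-1) ^+ k.
  have -> : s = (-1) ^+ (n - k.+1) * (-1) ^+ k.+1 by rewrite -exprD subnK.
  by rewrite mulrA -expr2 sqrr_sign mul1r exprS mulN1r.
rewrite -HN opprD opprK.
have -> : x - (n - k.+1)%:R * d = x + d + k%:R * d - 1.
  by rewrite natrB // mulrBl mul_n_d -[k.+1]addn1 natrD; ring.
by rewrite Hsub1 mulrA sgn mulNr.
Qed.

End AlternatingSums.

Section DecompositionAB.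
Variable R : realType.
Variable n : nat.
Hypothesis n_gt0 : (0 < n)%N.
Local Notation mu := (@lebesgue_measure R).
Local Notation d := (n%:R^-1 : R).
Local Notation s := ((-1) ^+ n : R).
Variable H : R -> R.
Hypotheses (cH : continuous H) (eH : even_2periodic H) (qH : quasiperiodic 1 s H).

(* The average of the [T_n^k H], [k < n]: the projection of [H] onto [W_a],
   since [T_n^n H = H]. *)
Let P x := d * altsum n H x.

Let cP : continuous P.
Proof. by move=> x; apply: cvgM; [exact: cvg_cst|exact: continuous_altsum]. Qed.

Let eP : even_2periodic P.
Proof.
split=> x; rewrite /P; last by rewrite altsumN //; exact: eH.2.
congr (_ * _); apply: eq_bigr => k _.
by rewrite -[in RHS]eH.1 addrAC.
Qed.

Let qP : quasiperiodic d (-1) P.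
Proof. by move=> x; rewrite /P altsum_shift_quasiperiodic // mulrN mulN1r. Qed.

Let P0 : \int[mu]_(x in `[0, 1]) P x = 0.
Proof.
have := quasiperiodic_Rintegral01 cP eP (invn_itv R n_gt0) qP.
by rewrite opprK => h; apply: (@mulfI _ 2); rewrite ?mulr0 // pnatr_eq0.
Qed.

Lemma Ysum_oppLap_ab : Ysum (Ytau n Sa) (Ytau n Sb) (fun phi => - Lap H phi).
Proof.
pose c := \int[mu]_(x in `[0, 1]) H x.
have c_s : (1 - s) * c = 0.
  by apply: quasiperiodic_Rintegral01 qH => //; rewrite ler01 ler1n.
have cG1 : continuous (fun x => - P x) by move=> x; apply: cvgN; exact: cP.
have cH' : continuous (fun x => c - H x).
  by move=> x; apply: cvgB; [exact: cvg_cst|exact: cH].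
have cG2 : continuous (fun x => c - H x + P x).
  by move=> x; apply: cvgD; [exact: cH'|exact: cP].
exists (Lap (fun x => - P x)), (Lap (fun x => c - H x + P x)); split; [|split].
- apply: (Ytau_even_2periodic (G := fun x => - P x)) => //.
  + exact: (even_2periodic_comp (fun p => - p)).
  + by under eq_Rintegral do rewrite -sub0r; rewrite Rintegral01_cstB // P0 subrr.
  + by apply/Weq_aE => x; rewrite qP mulrN.
- apply: (Ytau_even_2periodic (G := fun x => c - H x + P x)) => //.
  + exact: (even_2periodic_comp2 (fun h p => c - h + p)).
  + rewrite RintegralD ?integrable_continuous //.
    by rewrite Rintegral01_cstB // P0 subrr addr0.
  + move=> x; apply/Weq_bE; rewrite altsumD altsumB altsum_cst // sub0r.
    rewrite (altsum_antiperiodic x qP) /P /= mulrA mulfV ?mul1r ?addNr //.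
    by rewrite pnatr_eq0 -lt0n.
- move=> phi tphi /=; rewrite -LapD // (Lap_cstB c cH tphi).
  by congr (Lap _ phi); apply/funext => x; rewrite addrCA addNr addr0.
Qed.

End DecompositionAB.

Section SpaceX.
Variable R : realType.
Local Notation mu := (@lebesgue_measure R).

Lemma integrable_L2on01 (g : R -> R) :
  L2on `[0, 1] g -> mu.-integrable `[0, 1] (EFin \o g).
Proof.
move=> [mg ig].
have i1g2 : mu.-integrable `[0, 1] (EFin \o (fun x => 1 + g x ^+ 2)).
  rewrite (_ : _ \o _ = (EFin \o cst 1) \+ (EFin \o (fun x => g x ^+ 2))) //.
  apply: integrableD => //; first exact/integrable_continuous/cst_continuous.
  apply/integrableP; split; first by apply/measurable_EFinP; exact: measurable_funX.
  apply: le_lt_trans ig; rewrite le_eqVlt; apply/orP; left; apply/eqP.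
  by apply: eq_integral => x _ /=; rewrite ger0_norm // sqr_ge0.
apply: le_integrable i1g2 => //; first exact/measurable_EFinP.
move=> x _ /=; rewrite lee_fin [X in _ <= X]ger0_norm ?addr_ge0 ?sqr_ge0 //.
(* [|g| <= 1 + g^2] since [(|g| - 1)^2 >= 0] *)
have := sqr_ge0 (`|g x| - 1); have := normr_ge0 (g x).
have : `|g x| ^+ 2 = g x ^+ 2 by rewrite real_normK // num_real.
move=> ? ? ?; nra.
Qed.

Lemma Xsp_continuous (u : R -> R) : Xsp u -> {within `[0, 1], continuous u}.
Proof.
move=> [u1 [g [L2g [u_rep _]]]].
have primitive (h : R -> R) (c : R) : mu.-integrable `[0, 1] (EFin \o h) ->
    {within `[0, 1], continuous (fun x => c + \int[mu]_(t in `[0, x]) h t)}.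
  move=> ih x; apply: cvgD; first exact: cvg_cst.
  exact: (parameterized_integral_continuous ler01 ih).
have in01 x : x \in `[0, 1]%classic -> 0 <= x <= 1 by rewrite inE /= in_itv.
have cu1 : {within `[0, 1], continuous u1}.
  apply: subspace_eq_continuous (primitive _ (u1 0) (integrable_L2on01 L2g)).
  by move=> x /in01 /u_rep [e _]; exact/esym.
have iu1 : mu.-integrable `[0, 1] (EFin \o u1).
  by apply: continuous_compact_integrable cu1; exact: segment_compact.
apply: subspace_eq_continuous (primitive _ (u 0) iu1).
by move=> x /in01 /u_rep [_ e]; exact/esym.
Qed.

Lemma continuous_ext_Xtau n tau (v : R -> R) : Xtau n tau v -> continuous (ext v).
Proof. by move=> [/Xsp_continuous cv _]; exact: continuous_ext. Qed.

Lemma Xsum_ab_quasiperiodic n (v : R -> R) : (0 < n)%N ->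
  Xsum (Xtau n Sa) (Xtau n Sb) v ->
  continuous (ext v) /\ quasiperiodic 1 ((-1) ^+ n) (ext v).
Proof.
move=> n_gt0 [v1 [v2 [Xv1 [Xv2 v_sum]]]].
have ext_sum x : ext v x = ext v1 x + ext v2 x.
  by rewrite (eq_ext v_sum) !ext_tri_wave.
split.
  move=> x; rewrite (_ : ext v = fun y => ext v1 y + ext v2 y); last exact/funext.
  have cv1 := continuous_ext_Xtau Xv1; have cv2 := continuous_ext_Xtau Xv2.
  by apply: cvgD; [exact: cv1|exact: cv2].
have q1 := quasiperiodic_invn n_gt0 (proj1 (Weq_aE _ _) Xv1.2).
have q2 := Weq_b_quasiperiodic n_gt0 Xv2.2.
by move=> x; rewrite !ext_sum q1 q2 mulrDr.
Qed.

End SpaceX.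

Section SecondDerivative.
Variable R : realType.
Implicit Types (f p : R -> R).

Lemma derive1_comp_opp p x : (forall y, derivable p y 1) ->
  derive1 (fun y => p (- y)) x = - derive1 p (- x).
Proof.
move=> dp; rewrite (_ : (fun y => p (- y)) = p \o (@GRing.opp R)) //.
rewrite derive1_comp; [|exact: derivable_opp|exact: dp].
have -> : derive1 (@GRing.opp R) x = -1 by rewrite derive1E derive_val.
by rewrite mulrN1.
Qed.

Lemma continuous_d2 f : smooth f -> continuous (d2 f).
Proof.
move=> sf x; apply: differentiable_continuous; apply/derivable1_diffP.
exact: (sf 2%N x).
Qed.

Lemma odd_d2 f : smooth f -> odd_fun f -> odd_fun (d2 f).
Proof.
move=> sf f_odd.
have df y : derivable f y 1 by exact: (sf 0%N y).
have d2f y : derivable (derive1 f) y 1 by exact: (sf 1%N y).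
have f'_even y : derive1 f (- y) = derive1 f y.
  have := derive1_comp_opp y df.
  have -> : (fun z => f (- z)) = - f by apply/funext => z; rewrite f_odd.
  by rewrite derive1N // => /eqP; rewrite eqr_opp => /eqP.
move=> y; have := derive1_comp_opp y d2f.
have -> : (fun z => derive1 f (- z)) = derive1 f by apply/funext => z; rewrite f'_even.
by rewrite /d2 => ->; rewrite opprK.
Qed.

End SecondDerivative.

Section Hessian.
Variable R : realType.
Variables (n : nat) (f : R -> R) (lam : R) (u : R -> R).
Hypotheses (n_gt0 : (0 < n)%N) (f_smooth : smooth f) (f_odd : odd_fun f).
Hypothesis Xu : Xtau n Sa u.
Local Notation d := (n%:R^-1 : R).
Local Notation s := ((-1) ^+ n : R).

Let density (v w : R -> R) x := lam * d2 f (ext u x) * ext v x * ext w x.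

Let DuuF_density v w : DuuF f lam u v w = (fun phi => - Lap (density v w) phi).
Proof.
apply/funext => phi; rewrite /DuuF -Lap_ext; congr (- Lap _ phi).
by apply/funext => x; rewrite /density !ext_tri_wave.
Qed.

Let cu : continuous (ext u) := continuous_ext_Xtau Xu.
Let qu : quasiperiodic d (-1) (ext u) := proj1 (Weq_aE _ _) Xu.2.

Let continuous_density v w : continuous (ext v) -> continuous (ext w) ->
  continuous (density v w).
Proof.
have cM (F G : R -> R) : continuous F -> continuous G ->
    continuous (fun x => F x * G x).
  by move=> cF cG x; exact: cvgM (cF x) (cG x).
have cfu : continuous (fun x => d2 f (ext u x)).
  by move=> x; apply: continuous_comp; [exact: cu|exact: continuous_d2].
have clam : continuous (fun _ : R => lam) by exact: cst_continuous.
by move=> cv cw; exact: cM (cM _ _ (cM _ _ clam cfu) cv) cw.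
Qed.

Let even_2periodic_density v w : even_2periodic (density v w).
Proof.
by split=> x; rewrite /density !ext_tri_wave ?tri_waveD2 ?tri_waveN.
Qed.

Let quasiperiodic_weight e a b v : a ^+ 2 = 1 -> quasiperiodic e a (ext u) ->
  quasiperiodic e b (ext v) ->
  quasiperiodic e (a * b) (fun x => lam * d2 f (ext u x) * ext v x).
Proof.
move=> a2 qu' qv; apply: quasiperiodicM qv; apply: quasiperiodicZ.
exact: quasiperiodic_odd_comp (odd_d2 f_smooth f_odd) a2 qu'.
Qed.

Let quasiperiodic_density e a b c v w : a ^+ 2 = 1 -> quasiperiodic e a (ext u) ->
  quasiperiodic e b (ext v) -> quasiperiodic e c (ext w) ->
  quasiperiodic e (a * b * c) (density v w).
Proof. by move=> a2 qu' qv qw; apply: quasiperiodicM qw; exact: quasiperiodic_weight. Qed.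

Let sqrN1 : (-1) ^+ 2 = 1 :> R. Proof. by rewrite sqrrN expr1n. Qed.

Let qu1 : quasiperiodic 1 s (ext u) := quasiperiodic_invn n_gt0 qu.

Let Ytau_DuuF tau e a v w : continuous (ext v) -> continuous (ext w) ->
  0 <= e <= 2 -> quasiperiodic e a (density v w) ->
  (forall G, quasiperiodic e a G -> forall x, Weq n tau G x) ->
  Ytau n tau (DuuF f lam u v w).
Proof.
move=> cv cw e02 qD Weq_qp; rewrite DuuF_density.
have cD := continuous_density cv cw; have eD := even_2periodic_density v w.
by apply: Ytau_oppLap => //; apply: Weq_qp; exact: quasiperiodic_cstB qD.
Qed.

Let Ysum_DuuF v w : continuous (ext v) -> continuous (ext w) ->
  quasiperiodic 1 s (density v w) ->
  Ysum (Ytau n Sa) (Ytau n Sb) (DuuF f lam u v w).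
Proof.
move=> cv cw qD; rewrite DuuF_density.
have cD := continuous_density cv cw; have eD := even_2periodic_density v w.
exact: Ysum_oppLap_ab.
Qed.

Lemma DuuF_a_a v w : Xtau n Sa v -> Xtau n Sa w -> Ytau n Sa (DuuF f lam u v w).
Proof.
move=> Xv Xw; apply: (Ytau_DuuF (e := d) (a := -1)).
- exact: continuous_ext_Xtau Xv.
- exact: continuous_ext_Xtau Xw.
- exact: invn_itv.
- have := quasiperiodic_density sqrN1 qu
    (proj1 (Weq_aE _ _) Xv.2) (proj1 (Weq_aE _ _) Xw.2).
  by rewrite mulrNN mulr1 mul1r.
- by move=> G /Weq_aE.
Qed.

Lemma DuuF_ab_ab v w :
  Xsum (Xtau n Sa) (Xtau n Sb) v -> Xsum (Xtau n Sa) (Xtau n Sb) w ->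
  Ysum (Ytau n Sa) (Ytau n Sb) (DuuF f lam u v w).
Proof.
move=> /(Xsum_ab_quasiperiodic n_gt0) [cv qv] /(Xsum_ab_quasiperiodic n_gt0) [cw qw].
apply: Ysum_DuuF cv cw _.
have := quasiperiodic_density (sqrr_sign _ n) qu1 qv qw.
by rewrite -expr2 sqrr_sign mul1r.
Qed.

Lemma DuuF_a_b v w : Xtau n Sa v -> Xtau n Sb w -> Ytau n Sb (DuuF f lam u v w).
Proof.
move=> Xv Xw; rewrite DuuF_density.
have qv := proj1 (Weq_aE _ _) Xv.2.
have qA := quasiperiodic_weight sqrN1 qu qv; rewrite mulrNN mulr1 in qA.
have qw := Weq_b_quasiperiodic n_gt0 Xw.2.
have qD : quasiperiodic 1 s (density v w).
  by have := quasiperiodicM (quasiperiodic_invn n_gt0 qA) qw; rewrite expr1n mul1r.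
have cD := continuous_density (continuous_ext_Xtau Xv) (continuous_ext_Xtau Xw).
have eD := even_2periodic_density v w.
apply: Ytau_oppLap => // x; apply/Weq_bE.
rewrite altsumB altsum_cst; last first.
  by apply: quasiperiodic_Rintegral01 cD eD _ qD; rewrite ler01 ler1n.
by rewrite sub0r (altsumMl _ x qA) (proj1 (Weq_bE _ _ _) (Xw.2 x)) mulr0 oppr0.
Qed.

Lemma DuuF_c_c v w : Xtau n Sc v -> Xtau n Sc w ->
  Ysum (Ytau n Sa) (Ytau n Sb) (DuuF f lam u v w).
Proof.
move=> Xv Xw.
apply: Ysum_DuuF (continuous_ext_Xtau Xv) (continuous_ext_Xtau Xw) _.
have := quasiperiodic_density (sqrr_sign _ n) qu1
  (proj1 (Weq_cE n_gt0 _) Xv.2) (proj1 (Weq_cE n_gt0 _) Xw.2).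
by rewrite -mulrA mulrNN -expr2 sqrr_sign mulr1.
Qed.

Lemma DuuF_ab_c v w : Xsum (Xtau n Sa) (Xtau n Sb) v -> Xtau n Sc w ->
  Ytau n Sc (DuuF f lam u v w).
Proof.
move=> /(Xsum_ab_quasiperiodic n_gt0) [cv qv] Xw.
apply: (Ytau_DuuF (e := 1) (a := - s)) => //.
- exact: continuous_ext_Xtau Xw.
- by rewrite ler01 ler1n.
- have := quasiperiodic_density (sqrr_sign _ n) qu1 qv (proj1 (Weq_cE n_gt0 _) Xw.2).
  by rewrite -expr2 sqrr_sign mul1r.
- by move=> G /(Weq_cE n_gt0).
Qed.

End Hessian.

Theorem lemma2p14 (R : realType) (n : nat) (sigma : R) (f : R -> R)
  (lam : R) (u : R -> R) :
  (0 < n)%N -> 0 < sigma -> smooth f -> odd_fun f -> Xtau n Sa u ->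
  (* (i) *)
  (forall v w, Xtau n Sa v -> Xtau n Sa w ->
     Ytau n Sa (DuuF f lam u v w)) /\
  (* (ii) *)
  (forall v w, Xsum (Xtau n Sa) (Xtau n Sb) v -> Xsum (Xtau n Sa) (Xtau n Sb) w ->
     Ysum (Ytau n Sa) (Ytau n Sb) (DuuF f lam u v w)) /\
  (* (iii) *)
  (forall v w, Xtau n Sa v -> Xtau n Sb w ->
     Ytau n Sb (DuuF f lam u v w)) /\
  (* (iv) *)
  (forall v w, Xtau n Sc v -> Xtau n Sc w ->
     Ysum (Ytau n Sa) (Ytau n Sb) (DuuF f lam u v w)) /\
  (* (v) *)
  (forall v w, Xsum (Xtau n Sa) (Xtau n Sb) v -> Xtau n Sc w ->
     Ytau n Sc (DuuF f lam u v w)).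
Proof.
(* [sigma] only enters the linear part of [F], hence not [D_uu F]. *)
move=> n_gt0 _ f_smooth f_odd Xu.
split; first exact: DuuF_a_a.
split; first exact: DuuF_ab_ab.
split; first exact: DuuF_a_b.
split; first exact: DuuF_c_c.
exact: DuuF_ab_c.
Qed.
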